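(* Let $\mathcal F\subset\mathcal F_X$ be a convex set of feasible environments. For each decision rule $p$ and each history $h$, $$\inf_{F\in\mathcal F(h)}\frac{U_p(F,h)}{V(F,h)}=\inf_{F\in\mathcal F}\frac{U_p(F,h)}{V(F,h)}.$$
   Context: Sequential search model. Fix a discount factor $\delta\in(0,1)$, a Borel set $X\subset\mathbb{R}_+$ with $0\in X$, and an outside option $x_0>0$. Let $\mathcal F_X$ be the set of Borel probability distributions on $X$ with finite mean (''environments''). A history is $h_t=(x_0,x_1,\dots,x_t)$, $t\ge0$, $x_i\in X$, with best-so-far alternative $y_t=\max\{x_0,\dots,x_t\}$. A decision rule $p$ assigns to each history $h$ a stopping probability $p(h)\in[0,1]$. Given any environment $F$ and a history $h_t$, future alternatives $x_{t+1},x_{t+2},\dots$ are i.i.d. with law $F$; at each round $s\ge t$ the individual stops with probability $p(h_s)$, and stopping at round $s$ yields $\delta^{s-t}y_s$ (never stopping yields $0$). $U_p(F,h)$ is this expected payoff (defined for every $F$, whether or not consistent with $h$), and $V(F,h)=\sup_pU_p(F,h)$. An environment $F$ is consistent with $h_t$ if the sequence $x_1,\dots,x_t$ occurs with positive probability under $F$; $\mathcal F(h)$ is the set of environments in $\mathcal F$ consistent with $h$. *)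

From mathcomp Require Import all_boot all_order all_algebra.
From mathcomp Require Import all_classical all_reals all_analysis.
Set Implicit Arguments. Unset Strict Implicit. Unset Printing Implicit Defensive.
Import Order.TTheory GRing.Theory Num.Theory.
Local Open Scope classical_set_scope.
Local Open Scope ring_scope.

(* A history h_t = (x0, x1, ..., xt) is represented by the sequence
   [:: x1; ...; xt] : seq R, the outside option x0 being a fixed parameter. *)

Section Search.
Variable R : realType.

Definition best (x0 : R) (h : seq R) : R := foldr Num.max x0 h.

Definition is_rule (p : seq R -> R) : Prop := forall h, 0 <= p h <= 1.

(* expected discounted payoff, from history h, of the event "stop within the
   next n rounds" (rounds t, ..., t+n), future alternatives i.i.d. with law F *)
Fixpoint Un (delta x0 : R) (p : seq R -> R) (F : probability R R) (n : nat)
  (h : seq R) {struct n} : \bar R :=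
  match n with
  | 0 => (p h * best x0 h)%:E
  | n'.+1 => ((p h * best x0 h)%:E +
      ((1 - p h) * delta)%:E * \int[F]_x Un delta x0 p F n' (rcons h x))%E
  end.

(* U_p(F,h): expected payoff (never stopping yields 0); the partial payoffs are
   nondecreasing in n, so this is their limit *)
Definition U (delta x0 : R) (p : seq R -> R) (F : probability R R) (h : seq R)
  : \bar R := ereal_sup (range (fun n => Un delta x0 p F n h)).

Definition V (delta x0 : R) (F : probability R R) (h : seq R) : \bar R :=
  ereal_sup [set U delta x0 p F h | p in is_rule].

Definition environment (X : set R) (F : probability R R) : Prop :=
  F X = 1%E /\ F.-integrable setT (fun x => x%:E).

Definition consistent (F : probability R R) (h : seq R) : Prop :=
  (0 < \big[*%E/1%E]_(x <- h) F [set x])%E.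

Definition convex_envs (FF : set (probability R R)) : Prop :=
  forall F G, FF F -> FF G -> forall l : R, 0 <= l <= 1 ->
    exists H, FF H /\ forall A, measurable A ->
      H A = (l%:E * F A + (1 - l)%:E * G A)%E.

End Search.

(* Mixing a feasible F with a small weight t of a feasible environment G
   consistent with h yields, by convexity, a feasible environment H_t that is
   consistent with h.  With finite means all payoffs are at most the
   best-so-far alternative plus a constant, and an induction on the horizon
   gives U_p(H_t,h) <= U_p(F,h) + O(t) while V(H_t,h) is at least (1-t)^n
   times any n-round payoff under F.  So a lower bound c for the ratio over
   consistent environments satisfies c (1-t)^n W <= U_p(F,h) + O(t) for every
   n-round payoff W under F and every t, and letting t -> 0 gives
   c V(F,h) <= U_p(F,h). *)

From mathcomp Require Import all_boot all_order all_algebra.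
From mathcomp Require Import all_classical all_reals all_analysis.
From mathcomp Require Import measurable_realfun ring lra.
Import Order.TTheory GRing.Theory Num.Theory HBNNSimple.
Local Open Scope classical_set_scope.
Local Open Scope ring_scope.

(* Decision rules are arbitrary, so payoffs need not be measurable in the next
   alternative.  The integral of such a nonnegative function is the supremum
   of the integrals of the simple functions below it, and the library lemmas,
   which assume measurability, do not apply to it. *)
Section nonmeasurable_integral.
Context {d} {T : measurableType d} {R : realType}.
Variable mu : {measure set T -> \bar R}.
Local Open Scope ereal_scope.
Implicit Types f g : T -> \bar R.

Lemma le_ge0_integral f g : (forall x, 0 <= f x) -> (forall x, f x <= g x) ->
  \int[mu]_x f x <= \int[mu]_x g x.
Proof.
move=> f0 fg; have g0 x : 0 <= g x by apply: le_trans (fg x).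
rewrite !ge0_integralTE //; apply: ge_ereal_sup => _ [s sf <-].
by apply: ereal_sup_ubound; exists s => // x; apply: le_trans (fg x).
Qed.

Lemma ge0_integralZl_le f (k : R) : (0 <= k)%R -> (forall x, 0 <= f x) ->
  k%:E * \int[mu]_x f x <= \int[mu]_x (k%:E * f x).
Proof.
move=> k0 f0; have kf0 x : 0 <= k%:E * f x by rewrite mule_ge0.
have [->|k_neq0] := eqVneq k 0%R.
  by rewrite mul0e; apply: integral_ge0 => x _; rewrite mul0e.
have k_gt0 : (0 < k)%R by rewrite lt_def k_neq0 k0.
rewrite -lee_pdivlMl // [leLHS]ge0_integralTE //; apply: ge_ereal_sup => _ [s sf <-].
rewrite lee_pdivlMl // -sintegralrM ge0_integralTE //.
apply: ereal_sup_ubound; exists (scale_nnsfun s k0) => //= x.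
by rewrite EFinM lee_wpmul2l.
Qed.

(* A simple function below f + g splits as min(s, g) plus (s - g)^+, which lie
   below g and f respectively. *)
Lemma ge0_integralD_le f (g : T -> R) : (forall x, 0 <= f x) ->
  (forall x, 0 <= g x)%R -> measurable_fun setT g ->
  \int[mu]_x (f x + (g x)%:E) <= \int[mu]_x f x + \int[mu]_x (g x)%:E.
Proof.
move=> f0 g0 mg; have fg0 x : 0 <= f x + (g x)%:E by rewrite adde_ge0 ?lee_fin.
rewrite [leLHS]ge0_integralTE //; apply: ge_ereal_sup => _ [s sfg <-].
pose a x := Num.min (s x) (g x); pose b x := Num.max (s x - g x)%R 0%R.
have ms : measurable_fun setT (fun x => s x) by exact: measurable_funPT.
have ma : measurable_fun setT a by exact: measurable_minr.
have mb : measurable_fun setT b by apply: measurable_maxr => //; exact: measurable_funB.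
have a0 x : (0 <= a x)%R by rewrite le_min g0 andbT.
have b0 x : (0 <= b x)%R by rewrite le_max lexx orbT.
have s_ab x : (s x = a x + b x)%R.
  rewrite /a /b; case: (leP (s x) (g x)) => [sg|gs].
    by rewrite (max_idPr _) ?addr0 // subr_le0.
  by rewrite (max_idPl _) ?subr_ge0 ?ltW // addrC subrK.
rewrite -integralT_nnsfun (eq_integral (fun x => (a x)%:E + (b x)%:E)); last first.
  by move=> x _; rewrite s_ab EFinD.
rewrite ge0_integralD //; last 4 first.
- by move=> x _; rewrite lee_fin.
- exact/measurable_EFinP.
- by move=> x _; rewrite lee_fin.
- exact/measurable_EFinP.
rewrite addeC; apply: leeD; apply: le_ge0_integral => x; rewrite ?lee_fin //.
  have := sfg x; rewrite /b; case: (leP (s x - g x)%R 0%R) => // _.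
  by rewrite EFinB leeBlDr.
by rewrite ge_min lexx orbT.
Qed.

End nonmeasurable_integral.

Definition mixture {d} {T : measurableType d} {R : realType}
  (F G H : {measure set T -> \bar R}) (l : R) :=
  forall A, measurable A -> H A = (l%:E * F A + (1 - l)%:E * G A)%E.

Section mixture.
Context {d} {T : measurableType d} {R : realType}.
Context {F G H : {measure set T -> \bar R}} {l : R}.
Hypotheses (l01 : 0 <= l <= 1) (HFG : mixture F G H l).
Local Open Scope ereal_scope.

Let l_ge0 : (0 <= l)%R. Proof. by case/andP: l01. Qed.
Let l1_ge0 : (0 <= 1 - l)%R. Proof. by case/andP: l01; rewrite subr_ge0. Qed.

Lemma sintegral_mixture (s : {nnsfun T >-> R}) :
  sintegral H s = l%:E * sintegral F s + (1 - l)%:E * sintegral G s.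
Proof.
rewrite !sintegralE !ge0_mule_fsumr; try by move=> x; exact: nnsfun_mulemu_ge0.
rewrite -fsbig_split //; apply: eq_fsbigr => x /set_mem [t _ <-].
have st : 0 <= (s t)%:E by rewrite lee_fin.
by rewrite HFG // ge0_muleDr ?mule_ge0 // !muleA ![_ * (s t)%:E]muleC.
Qed.

Lemma ge0_integral_mixture_le (f : T -> \bar R) : (forall x, 0 <= f x) ->
  \int[H]_x f x <= l%:E * \int[F]_x f x + (1 - l)%:E * \int[G]_x f x.
Proof.
move=> f0; rewrite [leLHS]ge0_integralTE //; apply: ge_ereal_sup => _ [s sf <-].
rewrite sintegral_mixture; apply: leeD; apply: lee_wpmul2l; rewrite ?lee_fin //;
  by rewrite ge0_integralTE //; apply: ereal_sup_ubound; exists s.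
Qed.

Lemma ge0_integral_mixture_ge (f : T -> \bar R) : (forall x, 0 <= f x) ->
  l%:E * \int[F]_x f x <= \int[H]_x f x.
Proof.
move=> f0; have [->|l_neq0] := eqVneq l 0%R.
  by rewrite mul0e; apply: integral_ge0.
have l_gt0 : (0 < l)%R by rewrite lt_def l_neq0 l_ge0.
rewrite -lee_pdivlMl // [leLHS]ge0_integralTE //; apply: ge_ereal_sup => _ [s sf <-].
rewrite lee_pdivlMl //; apply: (@le_trans _ _ (sintegral H s)).
  by rewrite sintegral_mixture leeDl // mule_ge0 ?lee_fin // sintegral_ge0.
by rewrite ge0_integralTE //; apply: ereal_sup_ubound; exists s.
Qed.

End mixture.

Lemma consistent_mixture {R : realType} (F G H : probability R R) (l : R) s :
  0 <= l < 1 -> mixture F G H l -> consistent G s -> consistent H s.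
Proof.
move=> /andP[l0 l1] HFG; rewrite /consistent.
elim: s => [|a s IH]; first by rewrite !big_nil.
rewrite !big_cons => Gas.
have Gs0 : (0 <= \big[*%E/1%E]_(x <- s) G [set x])%E by exact: prode_ge0.
have /andP[Ga_gt0 Gs_gt0] :
    (0 < G [set a])%E && (0 < \big[*%E/1%E]_(x <- s) G [set x])%E.
  by rewrite !lt0e measure_ge0 Gs0 !andbT -negb_or -mule_eq0 gt_eqF.
rewrite mule_gt0 ?IH // HFG //.
have lGa : (0 < (1 - l)%:E * G [set a])%E by rewrite mule_gt0 // lte_fin subr_gt0.
by rewrite (lt_le_trans lGa) // leeDr // mule_ge0 ?lee_fin.
Qed.

Lemma bernoulli_ineq {R : realDomainType} n (x : R) :
  -1 <= x -> 1 + n%:R * x <= (1 + x) ^+ n.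
Proof.
move=> x_ge; elim: n => [|n IH]; first by rewrite mul0r addr0 expr0.
have : (1 + x) * (1 + n%:R * x) <= (1 + x) * (1 + x) ^+ n.
  by rewrite ler_wpM2l // -lerBlDl sub0r.
have : 0 <= n%:R * x * x by rewrite -mulrA mulr_ge0 // -expr2 sqr_ge0.
by rewrite -natr1 exprS; nra.
Qed.

Lemma le_of_mixing_limit {R : realFieldType} (A u D : R) n :
  0 <= A -> 0 <= D ->
  (forall t, 0 < t <= 1 -> A * (1 - t) ^+ n <= u + t * D) -> A <= u.
Proof.
move=> A0 D0 mix; apply/ler_addgt0Pr => e e_gt0.
pose M := A * n%:R + D + 1.
have M_gt0 : 0 < M by rewrite /M; have := mulr_ge0 A0 (ler0n _ n); lra.
(* Bernoulli's inequality turns the hypothesis into A - u <= t * M. *)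
pose t := e / (e + M).
have t_gt0 : 0 < t by rewrite divr_gt0 // addr_gt0.
have tE : t * (e + M) = e by rewrite mulfVK // gt_eqF // addr_gt0.
have t_le1 : t <= 1 by rewrite ler_pdivrMr ?mul1r ?lerDl ?ltW // addr_gt0.
have := mix t; rewrite t_gt0 t_le1 => /(_ isT).
have /(bernoulli_ineq n) : -1 <= - t by lra.
have t_ge0 := ltW t_gt0.
have : 0 <= A * (t * (n%:R * t)) by rewrite mulr_ge0 // mulr_ge0 // mulr_ge0.
rewrite /M in tE *; nra.
Qed.

Lemma lee_EFin_lbounds {R : realDomainType} (x y : \bar R) :
  (forall c : R, (c%:E <= x -> c%:E <= y)%E) -> (x <= y)%E.
Proof.
case: x => [r | | ] lb; first exact: lb.
  by rewrite (eq_infty (fun c => lb c (leey _))).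
exact: leNye.
Qed.

Section search.
Context {R : realType}.
Variables (delta x0 : R).
Hypotheses (delta01 : 0 < delta < 1) (x0_gt0 : 0 < x0).

Let delta_ge0 : 0 <= delta. Proof. by case/andP: delta01 => /ltW. Qed.

Lemma best_rcons h x : best x0 (rcons h x) = Num.max (best x0 h) x.
Proof. by elim: h => [|a h IH] /=; [rewrite maxC | rewrite IH maxA]. Qed.

Lemma best_gt0 h : 0 < best x0 h.
Proof. by elim: h => [|a h IH] //=; rewrite lt_max IH orbT. Qed.

Lemma best_rcons_le h x : best x0 (rcons h x) <= best x0 h + `|x|.
Proof.
rewrite best_rcons ge_max lerDl normr_ge0 /=.
by have := best_gt0 h; have := ler_norm x; lra.
Qed.

Lemma is_rule_stop : is_rule (fun _ : seq R => 1).
Proof. by move=> h; rewrite ler01 lexx. Qed.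

Definition abs_mean (Q : probability R R) := (\int[Q]_x (`|x|)%:E)%E.

Local Open Scope ereal_scope.

Lemma environment_abs_mean_fin {X : set R} {F : probability R R} :
  environment X F -> exists m : R, abs_mean F <= m%:E.
Proof.
move=> [_ /integrableP [_ F_int]]; exists (fine (abs_mean F)).
by rewrite fineK // ge0_fin_numE // integral_ge0.
Qed.

Lemma integral_affine_abs_le (Q : probability R R) (a k m : R) :
  (0 <= a)%R -> (0 <= k)%R -> abs_mean Q <= m%:E ->
  \int[Q]_x (a + k * `|x|)%:E <= (a + k * m)%:E.
Proof.
move=> a0 k0 Qm; have mabs : measurable_fun setT (fun x : R => (`|x|)%:E).
  by apply/measurable_EFinP; exact: normr_measurable.
under eq_integral do rewrite EFinD EFinM.
rewrite ge0_integralD //; last 2 first.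
- by move=> x _; rewrite mule_ge0 ?lee_fin.
- exact: measurable_funeM.
rewrite integral_cst //= probability_setT mule1 ge0_integralZl //.
by rewrite EFinD leeD2l // EFinM lee_wpmul2l ?lee_fin.
Qed.

Lemma Un_ge0 q Q n h : is_rule q -> 0 <= Un delta x0 q Q n h.
Proof.
move=> q_rule; elim: n h => [|n IH] h /=; have /andP[q0 q1] := q_rule h;
  have b0 := ltW (best_gt0 h).
  by rewrite lee_fin mulr_ge0.
rewrite adde_ge0 ?mule_ge0 ?lee_fin ?mulr_ge0 ?subr_ge0 //.
by apply: integral_ge0 => x _; exact: IH.
Qed.

Lemma Un_le_U q Q n h : Un delta x0 q Q n h <= U delta x0 q Q h.
Proof. by apply: ereal_sup_ubound; exists n. Qed.

Lemma ge_U q Q h B :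
  (forall n, Un delta x0 q Q n h <= B) -> U delta x0 q Q h <= B.
Proof. by move=> UnB; apply: ge_ereal_sup => _ [n _ <-]. Qed.

Lemma U_le_V q Q h : is_rule q -> U delta x0 q Q h <= V delta x0 Q h.
Proof. by move=> q_rule; apply: ereal_sup_ubound; exists q. Qed.

Lemma ge_V Q h B :
  (forall q, is_rule q -> U delta x0 q Q h <= B) -> V delta x0 Q h <= B.
Proof. by move=> UB; apply: ge_ereal_sup => _ [q q_rule <-]; exact: UB. Qed.

Lemma V_ge_best Q h : (best x0 h)%:E <= V delta x0 Q h.
Proof.
apply: le_trans (U_le_V _ Q h is_rule_stop); apply: le_trans (Un_le_U _ _ 0 h).
by rewrite /= mul1r.
Qed.

Section bounded_mean.
Context {m K : R}.
Hypotheses (K_ge0 : (0 <= K)%R) (K_fix : (delta * (m + K) <= K)%R).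

Lemma integral_best_rcons_le (Q : probability R R) h (f : R -> \bar R) :
  abs_mean Q <= m%:E -> (forall x, 0 <= f x) ->
  (forall x, f x <= (best x0 (rcons h x) + K)%:E) ->
  \int[Q]_x f x <= (best x0 h + K + m)%:E.
Proof.
move=> Qm f0 fb; have b0 := ltW (best_gt0 h).
apply: (@le_trans _ _ (\int[Q]_x (best x0 h + K + 1 * `|x|)%:E)).
  apply: le_ge0_integral => // x; apply: le_trans (fb x) _.
  by rewrite lee_fin mul1r; have := best_rcons_le h x; lra.
by rewrite -[in leRHS](mul1r m) integral_affine_abs_le ?addr_ge0.
Qed.

Lemma Un_le q Q n h : is_rule q -> abs_mean Q <= m%:E ->
  Un delta x0 q Q n h <= (best x0 h + K)%:E.
Proof.
move=> q_rule Qm; elim: n h => [|n IH] h /=; have /andP[q0 q1] := q_rule h;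
  have b0 := best_gt0 h.
  rewrite lee_fin; have := ler_wpM2r (ltW b0) q1; rewrite mul1r.
  by have := K_ge0; lra.
have I_le := integral_best_rcons_le Q h _ Qm (fun x => Un_ge0 _ _ n _ q_rule) (fun x => IH _).
apply: (@le_trans _ _ ((q h * best x0 h)%:E +
  ((1 - q h) * delta)%:E * (best x0 h + K + m)%:E)).
  by rewrite leeD2l // lee_wpmul2l // lee_fin mulr_ge0 ?subr_ge0.
rewrite -EFinM -EFinD lee_fin.
have [_ delta_lt1] := andP delta01.
have q1' : (0 <= 1 - q h)%R by rewrite subr_ge0.
have b1 : (0 <= (1 - delta) * best x0 h)%R by rewrite mulr_ge0 ?subr_ge0 ?ltW.
have K1 : (0 <= K - delta * (m + K))%R by rewrite subr_ge0.
by have := mulr_ge0 q1' (addr_ge0 b1 K1); have := mulr_ge0 q0 K_ge0; lra.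
Qed.

Lemma Un_fin_num q Q n h : is_rule q -> abs_mean Q <= m%:E ->
  Un delta x0 q Q n h \is a fin_num.
Proof.
move=> q_rule Qm; rewrite ge0_fin_numE ?Un_ge0 //.
exact: le_lt_trans (Un_le _ _ n h q_rule Qm) (ltry _).
Qed.

Lemma U_fin_num q Q h : is_rule q -> abs_mean Q <= m%:E ->
  U delta x0 q Q h \is a fin_num.
Proof.
move=> q_rule Qm; rewrite ge0_fin_numE; last first.
  exact: le_trans (Un_ge0 _ _ 0 h q_rule) (Un_le_U _ _ 0 h).
apply: le_lt_trans (ltry (best x0 h + K)).
by apply: ge_U => n; exact: Un_le.
Qed.

Lemma V_fin_num Q h : abs_mean Q <= m%:E -> V delta x0 Q h \is a fin_num.
Proof.
move=> Qm; rewrite ge0_fin_numE; last first.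
  by apply: le_trans (V_ge_best Q h); rewrite lee_fin ltW ?best_gt0.
apply: le_lt_trans (ltry (best x0 h + K)).
by apply: ge_V => q q_rule; apply: ge_U => n; exact: Un_le.
Qed.

End bounded_mean.

Definition payoff_ratio p Q h := U delta x0 p Q h * (V delta x0 Q h)^-1.

Section mixture_payoffs.
Context {F G H : probability R R} {l : R}.
Hypotheses (l01 : (0 <= l <= 1)%R) (HFG : mixture F G H l).

Let l_ge0 : (0 <= l)%R. Proof. by case/andP: l01. Qed.
Let l1_ge0 : (0 <= 1 - l)%R. Proof. by case/andP: l01; rewrite subr_ge0. Qed.

Lemma Un_mixture_ge q n h : is_rule q ->
  (l ^+ n)%:E * Un delta x0 q F n h <= Un delta x0 q H n h.
Proof.
move=> q_rule; elim: n h => [|n IH] h /=; first by rewrite expr0 mul1e.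
have /andP[q0 q1] := q_rule h; have b0 := ltW (best_gt0 h).
have c0 : (0 <= (1 - q h) * delta)%R by rewrite mulr_ge0 ?subr_ge0.
have UnF0 x : 0 <= Un delta x0 q F n (rcons h x) by exact: Un_ge0.
have UnH0 x : 0 <= Un delta x0 q H n (rcons h x) by exact: Un_ge0.
have int_ge : (l ^+ n.+1)%:E * \int[F]_x Un delta x0 q F n (rcons h x) <=
              \int[H]_x Un delta x0 q H n (rcons h x).
  apply: (le_trans _ (ge0_integral_mixture_ge l01 HFG _ UnH0)).
  rewrite exprS EFinM -muleA lee_wpmul2l ?lee_fin //.
  apply: le_trans (ge0_integralZl_le _ _ _ (exprn_ge0 n l_ge0) UnF0) _.
  apply: le_ge0_integral => [x|x]; last exact: IH.
  by rewrite mule_ge0 ?lee_fin ?exprn_ge0.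
rewrite ge0_muleDr; last 2 first.
- by rewrite lee_fin mulr_ge0.
- by rewrite mule_ge0 ?lee_fin //; apply: integral_ge0.
apply: leeD.
  by rewrite -EFinM lee_fin ler_piMl ?mulr_ge0 // exprn_ile1 //; case/andP: l01.
by rewrite muleCA lee_wpmul2l ?lee_fin.
Qed.

Lemma abs_mean_mixture_le m : abs_mean F <= m%:E -> abs_mean G <= m%:E ->
  abs_mean H <= m%:E.
Proof.
move=> Fm Gm; have abs0 (x : R) : 0 <= (`|x|)%:E by rewrite lee_fin.
apply: le_trans (ge0_integral_mixture_le l01 HFG _ abs0) _.
apply: (@le_trans _ _ (l%:E * m%:E + (1 - l)%:E * m%:E)).
  by apply: leeD; rewrite lee_wpmul2l ?lee_fin.
by rewrite -!EFinM -EFinD lee_fin; lra.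
Qed.

(* [K] bounds the continuation value above the best-so-far alternative, and
   [al], [be] keep the error bound (1 - l) * (al * best + be) stable under one
   more discounted round. *)
Context {m K al be : R}.
Hypotheses (Fm : abs_mean F <= m%:E) (Gm : abs_mean G <= m%:E).
Hypotheses (K_ge0 : (0 <= K)%R) (K_fix : (delta * (m + K) <= K)%R).
Hypotheses (al_ge0 : (0 <= al)%R) (al_fix : (delta * (1 + al) <= al)%R).
Hypotheses (be_ge0 : (0 <= be)%R)
  (be_fix : (delta * ((al + 1) * m + K + be) <= be)%R).

Let Hm : abs_mean H <= m%:E. Proof. exact: abs_mean_mixture_le. Qed.

Let m_ge0 : (0 <= m)%R.
Proof. by rewrite -lee_fin; apply: le_trans Fm; apply: integral_ge0. Qed.

Lemma integral_mixture_step h (f g : R -> \bar R) :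
  (forall x, 0 <= f x) -> (forall x, 0 <= g x) ->
  (forall x, g x <= (best x0 (rcons h x) + K)%:E) ->
  (forall x, g x <= f x + ((1 - l) * (al * best x0 (rcons h x) + be))%:E) ->
  \int[H]_x g x <= \int[F]_x f x +
    ((1 - l) * ((1 + al) * best x0 h + ((al + 1) * m + K + be)))%:E.
Proof.
move=> f0 g0 gK gf; set b := best x0 h; have b0 := ltW (best_gt0 h).
pose a := ((1 - l) * (al * b + be))%R; pose k := ((1 - l) * al)%R.
have a0 : (0 <= a)%R by rewrite mulr_ge0 // addr_ge0 // mulr_ge0.
have k0 : (0 <= k)%R by rewrite mulr_ge0.
have affine0 (x : R) : (0 <= a + k * `|x|)%R by rewrite addr_ge0 // mulr_ge0.
have affine_mes : measurable_fun setT (fun x : R => a + k * `|x|)%R.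
  by apply: measurable_funD => //; apply: measurable_funM => //; exact: normr_measurable.
have gF : \int[F]_x g x <= \int[F]_x f x + (a + k * m)%:E.
  apply: le_trans (_ : \int[F]_x (f x + (a + k * `|x|)%:E) <= _).
    apply: le_ge0_integral => // x; apply: le_trans (gf x) _.
    rewrite leeD2l // lee_fin /a /k.
    have := best_rcons_le h x; rewrite -/b => bx.
    have : (0 <= b + `|x| - best x0 (rcons h x))%R by rewrite subr_ge0.
    by move/(mulr_ge0 (mulr_ge0 l1_ge0 al_ge0)); lra.
  apply: le_trans (ge0_integralD_le F _ (fun x => a + k * `|x|)%R f0 affine0 affine_mes) _.
  by rewrite leeD2l // integral_affine_abs_le.
have gG : \int[G]_x g x <= (b + K + m)%:E.
  exact: integral_best_rcons_le Gm g0 gK.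
apply: le_trans (ge0_integral_mixture_le l01 HFG _ g0) _.
have lF : l%:E * \int[F]_x g x <= \int[F]_x g x.
  by rewrite gee_pMl ?integral_ge0 // lee_fin; case/andP: l01.
apply: le_trans (leeD lF (lee_wpmul2l _ gG)) _; first by rewrite lee_fin.
apply: le_trans (leeD2r _ gF) _.
rewrite -EFinM -addeA -EFinD; apply: leeD2l; rewrite lee_fin /a /k; lra.
Qed.

Lemma Un_mixture_le q n h : is_rule q ->
  Un delta x0 q H n h <=
  Un delta x0 q F n h + ((1 - l) * (al * best x0 h + be))%:E.
Proof.
move=> q_rule; elim: n h => [|n IH] h /=.
  by rewrite leeDl // lee_fin mulr_ge0 // addr_ge0 // mulr_ge0 // ltW ?best_gt0.
have /andP[q0 q1] := q_rule h; set b := best x0 h.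
have b0 : (0 <= b)%R by rewrite ltW ?best_gt0.
have [_ delta_lt1] := andP delta01.
set c := ((1 - q h) * delta)%R.
have c0 : (0 <= c)%R by rewrite mulr_ge0 ?subr_ge0.
have c_le : (c <= delta)%R by rewrite /c ler_piMl // ?lerBlDr ?lerDl.
have step := integral_mixture_step h _ _ (fun x => Un_ge0 q F n _ q_rule)
  (fun x => Un_ge0 q H n _ q_rule) (fun x => Un_le K_ge0 K_fix q H n _ q_rule Hm)
  (fun x => IH _).
rewrite -/b in step; rewrite -addeA leeD2l //.
apply: le_trans (lee_wpmul2l _ step) _; first by rewrite lee_fin.
set X := ((al + 1) * m + K + be)%R.
have X0 : (0 <= X)%R by rewrite /X !addr_ge0 // mulr_ge0 // addr_ge0.
have E0 : (0 <= (1 - l) * ((1 + al) * b + X))%R.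
  by rewrite mulr_ge0 // addr_ge0 // mulr_ge0 // addr_ge0.
rewrite ge0_muleDr ?lee_fin //; last by apply: integral_ge0 => x _; exact: Un_ge0.
rewrite leeD2l // -EFinM lee_fin.
have al' : (0 <= al - delta * (1 + al))%R by rewrite subr_ge0.
have be' : (0 <= be - delta * X)%R by rewrite subr_ge0.
have e1 := mulr_ge0 (mulr_ge0 l1_ge0 b0) al'.
have e2 := mulr_ge0 l1_ge0 be'.
have e3 : (0 <= (delta - c) * ((1 - l) * ((1 + al) * b + X)))%R.
  by rewrite mulr_ge0 // subr_ge0.
lra.
Qed.

Lemma U_mixture_le p h : is_rule p ->
  U delta x0 p H h <= U delta x0 p F h + ((1 - l) * (al * best x0 h + be))%:E.
Proof.
move=> p_rule; apply: ge_U => n; apply: le_trans (Un_mixture_le p n h p_rule) _.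
exact/leeD2r/Un_le_U.
Qed.

Lemma Un_le_ratio_mixture p q n h (c : R) :
  is_rule p -> is_rule q -> (0 < c)%R -> c%:E <= payoff_ratio p H h ->
  (c * l ^+ n)%:E * Un delta x0 q F n h <=
  U delta x0 p F h + ((1 - l) * (al * best x0 h + be))%:E.
Proof.
move=> p_rule q_rule c_gt0; have VH := V_fin_num K_ge0 K_fix H h Hm.
have v_gt0 : (0 < fine (V delta x0 H h))%R.
  by rewrite -lte_fin fineK // (lt_le_trans _ (V_ge_best H h)) // lte_fin best_gt0.
rewrite /payoff_ratio -(fineK VH) inver gt_eqF // lee_pdivlMr // => cVU.
apply: (le_trans _ (U_mixture_le p h p_rule)); apply: (le_trans _ cVU).
rewrite EFinM -muleA lee_wpmul2l ?lee_fin ?(ltW c_gt0) // fineK //.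
apply: le_trans (Un_mixture_ge q n h q_rule) _.
exact: le_trans (Un_le_U _ _ n h) (U_le_V _ _ h q_rule).
Qed.

End mixture_payoffs.

Lemma exists_discount_fixpoint (X : R) : (0 <= X)%R ->
  exists2 Y : R, (0 <= Y)%R & (delta * (X + Y) <= Y)%R.
Proof.
have [delta_gt0 delta_lt1] := andP delta01; move=> X0.
have d1 : (0 < 1 - delta)%R by rewrite subr_gt0.
exists (X / (1 - delta))%R; first by rewrite divr_ge0 // ltW.
have XE : (X / (1 - delta) * (1 - delta) = X)%R by rewrite mulfVK ?gt_eqF.
have := mulr_ge0 delta_ge0 X0; nra.
Qed.

Lemma ratio_le_of_mixtures p h (F G : probability R R) (m c : R) :
  is_rule p -> abs_mean F <= m%:E -> abs_mean G <= m%:E ->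
  (forall l, (0 <= l < 1)%R ->
    exists2 H : probability R R, mixture F G H l & c%:E <= payoff_ratio p H h) ->
  c%:E <= payoff_ratio p F h.
Proof.
move=> p_rule Fm Gm mix.
have m_ge0 : (0 <= m)%R by rewrite -lee_fin; apply: le_trans Fm; exact: integral_ge0.
have [K K_ge0 K_fix] := exists_discount_fixpoint _ m_ge0.
have [al al_ge0 al_fix] := exists_discount_fixpoint _ ler01.
have [be be_ge0 be_fix] : exists2 be : R, (0 <= be)%R &
    (delta * ((al + 1) * m + K + be) <= be)%R.
  by apply: exists_discount_fixpoint; rewrite addr_ge0 // mulr_ge0 // addr_ge0.
have UF := U_fin_num K_ge0 K_fix p F h p_rule Fm.
have VF := V_fin_num K_ge0 K_fix F h Fm.
set u := fine (U delta x0 p F h); set v := fine (V delta x0 F h).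
have u_ge0 : (0 <= u)%R.
  by apply: fine_ge0; exact: le_trans (Un_ge0 _ _ 0 h p_rule) (Un_le_U _ _ 0 h).
have v_gt0 : (0 < v)%R.
  by rewrite -lte_fin fineK // (lt_le_trans _ (V_ge_best F h)) // lte_fin best_gt0.
rewrite /payoff_ratio -(fineK UF) -(fineK VF) -/u -/v inver gt_eqF // -EFinM lee_fin.
have [c_le0|c_gt0] := leP c 0%R; first by apply: le_trans c_le0 _; rewrite divr_ge0 // ltW.
rewrite ler_pdivlMr // mulrC -ler_pdivlMr // -lee_fin /v fineK //.
apply: ge_V => q q_rule; apply: ge_U => n.
have UnF := Un_fin_num K_ge0 K_fix q F n h q_rule Fm.
rewrite -(fineK UnF) lee_fin ler_pdivlMr // mulrC.
apply: (le_of_mixing_limit _ _ (al * best x0 h + be) n) => [||t /andP[t_gt0 t_le1]].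
- exact: mulr_ge0 (ltW c_gt0) (fine_ge0 (Un_ge0 _ _ n h q_rule)).
- by rewrite addr_ge0 // mulr_ge0 // ltW // best_gt0.
have l01 : (0 <= 1 - t <= 1)%R by apply/andP; split; lra.
have [H HFG cH] : exists2 H : probability R R, mixture F G H (1 - t)
    & c%:E <= payoff_ratio p H h.
  by apply: mix; apply/andP; split; lra.
have := Un_le_ratio_mixture l01 HFG Fm Gm K_ge0 K_fix al_ge0 al_fix be_ge0 be_fix
  p q n h c p_rule q_rule c_gt0 cH.
rewrite -[in X in X <= _ -> _](fineK UnF) -(fineK UF) -EFinM -EFinD lee_fin -/u.
lra.
Qed.

End search.

Theorem proposition2 (R : realType) (delta x0 : R) (X : set R)
  (FF : set (probability R R)) (p : seq R -> R) (h : seq R) :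
  0 < delta < 1 -> measurable X -> X `<=` [set x | 0 <= x] -> X 0 -> 0 < x0 ->
  FF `<=` environment X -> convex_envs FF ->
  is_rule p -> (forall x, x \in h -> X x) ->
  (exists F, FF F /\ consistent F h) ->
  ereal_inf [set (U delta x0 p F h * (V delta x0 F h)^-1)%E
              | F in [set F | FF F /\ consistent F h]]
  = ereal_inf [set (U delta x0 p F h * (V delta x0 F h)^-1)%E | F in FF].
Proof.
move=> delta01 _ _ _ x0_gt0 FF_env FF_convex p_rule _ [G [FF_G G_h]].
apply/eqP; rewrite eq_le; apply/andP; split; last first.
  by apply: ereal_inf_le_tmp => _ [F [FF_F _] <-]; exists F.
apply: le_ereal_inf_tmp => _ [F FF_F <-].
have [mF Fm] := environment_abs_mean_fin (FF_env F FF_F).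
have [mG Gm] := environment_abs_mean_fin (FF_env G FF_G).
apply: lee_EFin_lbounds => c c_le_inf.
apply: (ratio_le_of_mixtures _ _ delta01 x0_gt0 p h F G (Num.max mF mG) c p_rule).
- by apply: le_trans Fm _; rewrite lee_fin le_max lexx.
- by apply: le_trans Gm _; rewrite lee_fin le_max lexx orbT.
move=> l l01; have l01' : 0 <= l <= 1 by case/andP: l01 => -> /ltW.
have [H [FF_H HFG]] := FF_convex F G FF_F FF_G l l01'.
exists H => //; apply: le_trans c_le_inf _; apply: ereal_inf_lbound.
by exists H => //; split => //; exact: consistent_mixture l01 HFG G_h.
Qed.
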